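(* Let $\mathcal{A}$ be a dual Banach algebra and let $\varphi$ be a weak$^*$-continuous character on $\mathcal{A}$. If $\mathcal{A}$ is Johnson pseudo-Connes amenable, then $\mathcal{A}$ is $\varphi$-Connes amenable.
   Context: A dual Banach algebra is a Banach algebra $\mathcal{A}$ together with a closed $\mathcal{A}$-submodule $\mathcal{A}_*$ of $\mathcal{A}^*$ such that $\mathcal{A}=(\mathcal{A}_* )^*$. For a bimodule $E$, $\sigma wc(E)$ is the set of $x\in E$ for which $a\mapsto a\cdot x$, $a\mapsto x\cdot a$ are weak$^*$-weak continuous. For a weak$^*$-continuous character $\varphi$, $\mathcal{A}$ is $\varphi$-Connes amenable if there is a bounded linear functional $m$ on $\sigma wc(\mathcal{A}^* )$ with $m(\varphi)=1$ and $m(f\cdot a)=\varphi(a)m(f)$ for all $a\in\mathcal{A}$, $f\in\sigma wc(\mathcal{A}^* )$. $\mathcal{A}\hat{\otimes}\mathcal{A}$ has actions $a\cdot(b\otimes c)=ab\otimes c$, $(b\otimes c)\cdot a=b\otimes ca$; duals carry the dual actions. $\pi_{\mathcal{A}}$ is the multiplication map $\mathcal{A}\hat{\otimes}\mathcal{A}\to\mathcal{A}$, $i_{\mathcal{A}_*}:\mathcal{A}_*\hookrightarrow\mathcal{A}^*$ the canonical embedding. $\mathcal{A}$ is Johnson pseudo-Connes amenable if there is a (not necessarily bounded) net $(m_\alpha)$ in $(\mathcal{A}\hat{\otimes}\mathcal{A})^{**}$ with $\langle T,a\cdot m_\alpha\rangle=\langle T,m_\alpha\cdot a\rangle$ for all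 $a\in\mathcal{A}$, $T\in\sigma wc((\mathcal{A}\hat{\otimes}\mathcal{A})^* )$, $\alpha$, and $i_{\mathcal{A}_*}^*\pi_{\mathcal{A}}^{**}(m_\alpha)a\to a$ for every $a\in\mathcal{A}$. *)

From HB Require Import structures.
From mathcomp Require Import all_boot all_order all_algebra.
From mathcomp Require Import complex.
From mathcomp Require Import all_classical all_reals all_analysis.
Import numFieldTopology.Exports numFieldNormedType.Exports.
Set Implicit Arguments. Unset Strict Implicit. Unset Printing Implicit Defensive.
Import Order.TTheory GRing.Theory Num.Theory.
Local Open Scope ring_scope.
Local Open Scope complex_scope.
Local Open Scope classical_set_scope.

Section DualBanach.
Variables (R : realType) (A : completeNormedModType R[i]).
Local Notation C := (R[i]).
Variable mul : A -> A -> A.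

Definition banach_algebra : Prop :=
  (forall (k : C) x y z, mul (k *: x + y) z = k *: mul x z + mul y z) /\
  (forall (k : C) x y z, mul z (k *: x + y) = k *: mul z x + mul z y) /\
  (forall x y z, mul x (mul y z) = mul (mul x y) z) /\
  (forall x y, `|mul x y| <= `|x| * `|y|).

Definition lin_fun (f : A -> C) : Prop :=
  forall (k : C) x y, f (k *: x + y) = k * f x + f y.
Definition opbound (f : A -> C) (c : C) : Prop := forall a, `|f a| <= c * `|a|.
Definition dual_elt (f : A -> C) : Prop := lin_fun f /\ exists c, opbound f c.

Definition lact (a : A) (f : A -> C) : A -> C := fun b => f (mul b a).
Definition ract (f : A -> C) (a : A) : A -> C := fun b => f (mul a b).

Definition dual_on (S : (A -> C) -> Prop) (Phi : (A -> C) -> C) : Prop :=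
  (forall (k : C) f g, S f -> S g ->
      Phi (fun x => k * f x + g x) = k * Phi f + Phi g) /\
  exists c : C, forall f (d : C), S f -> 0 <= d -> opbound f d -> `|Phi f| <= c * d.

Definition dual_banach_algebra (Apre : (A -> C) -> Prop) : Prop :=
  banach_algebra /\
  (forall f, Apre f -> dual_elt f) /\
  Apre (fun _ => 0) /\
  (forall (k : C) f g, Apre f -> Apre g -> Apre (fun x => k * f x + g x)) /\
  (forall f, dual_elt f ->
     (forall e : C, 0 < e -> exists g, Apre g /\ opbound (fun x => f x - g x) e) ->
     Apre f) /\
  (forall a f, Apre f -> Apre (lact a f) /\ Apre (ract f a)) /\
  (* the canonical map A -> (A_* )^*, a |-> (f |-> f a), is an isometry ... *)
  (forall a (e : C), 0 < e ->
     exists f, Apre f /\ opbound f 1 /\ `|a| - e <= `|f a|) /\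
  (* ... onto (A_* )^* *)
  (forall Phi, dual_on Apre Phi -> exists a, forall f, Apre f -> Phi f = f a).

(** weak*-continuity (topology sigma(A, A_* )) of a map g : A -> C:
    convergence characterisation of continuity for the initial topology. *)
Definition wstar_cont (Apre : (A -> C) -> Prop) (g : A -> C) : Prop :=
  forall (F : set_system A) (a : A), Filter F ->
    (forall f, Apre f -> (f @ F) --> (f a : C^o)) -> (g @ F) --> (g a : C^o).

Definition wstar_character (Apre : (A -> C) -> Prop) (phi : A -> C) : Prop :=
  lin_fun phi /\ (forall a b, phi (mul a b) = phi a * phi b) /\
  (exists a, phi a != 0) /\ wstar_cont Apre phi.

(** sigma wc(A^* ): f in A^* with a |-> a.f, a |-> f.a weak*-weak continuous,
    the weak topology on A^* being sigma(A^*, A^** ). *)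
Definition swc_dual (Apre : (A -> C) -> Prop) (f : A -> C) : Prop :=
  dual_elt f /\
  forall Phi, dual_on dual_elt Phi ->
    wstar_cont Apre (fun a => Phi (lact a f)) /\
    wstar_cont Apre (fun a => Phi (ract f a)).

Definition phi_connes_amenable (Apre : (A -> C) -> Prop) (phi : A -> C) : Prop :=
  exists m : (A -> C) -> C,
    dual_on (swc_dual Apre) m /\ m phi = 1 /\
    forall a f, swc_dual Apre f -> m (ract f a) = phi a * m f.

(** ---- (A ⊗^ A)^* identified with bounded bilinear forms on A x A ---- *)
Definition bil_elt (T : A -> A -> C) : Prop :=
  (forall (k : C) x y z, T (k *: x + y) z = k * T x z + T y z) /\
  (forall (k : C) x y z, T z (k *: x + y) = k * T z x + T z y) /\
  exists c : C, forall x y, `|T x y| <= c * `|x| * `|y|.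
Definition bilbound (T : A -> A -> C) (c : C) : Prop :=
  forall x y, `|T x y| <= c * `|x| * `|y|.

(* dual actions: <a.T, u> = <T, u.a>, <T.a, u> = <T, a.u>, where
   a.(b (x) c) = ab (x) c and (b (x) c).a = b (x) ca *)
Definition blact (a : A) (T : A -> A -> C) : A -> A -> C := fun b c => T b (mul c a).
Definition bract (T : A -> A -> C) (a : A) : A -> A -> C := fun b c => T (mul a b) c.

(* (A ⊗^ A)^** : bounded linear functionals on the bounded bilinear forms *)
Definition bidual_elt (m : (A -> A -> C) -> C) : Prop :=
  (forall (k : C) S T, bil_elt S -> bil_elt T ->
      m (fun x y => k * S x y + T x y) = k * m S + m T) /\
  exists c : C, forall T (d : C), bil_elt T -> 0 <= d -> bilbound T d -> `|m T| <= c * d.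

Definition swc_bil (Apre : (A -> C) -> Prop) (T : A -> A -> C) : Prop :=
  bil_elt T /\
  forall Psi, bidual_elt Psi ->
    wstar_cont Apre (fun a => Psi (blact a T)) /\
    wstar_cont Apre (fun a => Psi (bract T a)).

Definition pi_star (f : A -> C) : A -> A -> C := fun b c => f (mul b c).

Definition directed (I : Type) (le : I -> I -> Prop) : Prop :=
  (exists i : I, True) /\ (forall i, le i i) /\
  (forall i j k, le i j -> le j k -> le i k) /\
  (forall i j, exists k, le i k /\ le j k).
Definition net_cvg (I : Type) (le : I -> I -> Prop) (x : I -> A) (y : A) : Prop :=
  forall e : C, 0 < e -> exists i0, forall i, le i0 i -> `|x i - y| < e.

(** Johnson pseudo-Connes amenability.  e i is the element of A = (A_* )^*
    equal to i_{A_*}^* pi^** (m i), i.e. f (e i) = <pi^** (m i), f> = m i (pi^* f)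
    for f in A_*. *)
Definition johnson_pseudo_connes_amenable (Apre : (A -> C) -> Prop) : Prop :=
  exists (I : Type) (le : I -> I -> Prop) (m : I -> (A -> A -> C) -> C) (e : I -> A),
    directed le /\
    (forall i, bidual_elt (m i)) /\
    (* <T, a.m> = <T, m.a> for T in sigma wc *)
    (forall i a T, swc_bil Apre T -> m i (bract T a) = m i (blact a T)) /\
    (forall i f, Apre f -> f (e i) = m i (pi_star f)) /\
    (forall a, net_cvg le (fun i => mul (e i) a) a).

End DualBanach.

From HB Require Import structures.
From mathcomp Require Import all_boot all_order all_algebra.
From mathcomp Require Import complex.
From mathcomp Require Import all_classical all_reals all_analysis.
From mathcomp Require Import ring.
From Stdlib Require List.
Import numFieldTopology.Exports numFieldNormedType.Exports.
Import Order.TTheory GRing.Theory Num.Theory.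
Local Open Scope ring_scope.
Local Open Scope complex_scope.
Local Open Scope classical_set_scope.
Set Implicit Arguments. Unset Strict Implicit. Unset Printing Implicit Defensive.

(* Weak*-continuity of phi, tested along the filter generated by the common
   kernels of finitely many predual functionals, forces phi to vanish on one
   such kernel; hence phi is a linear combination of predual functionals and
   lies in A_*.  Therefore phi (e_i) = m_i (phi o pi), and phi (e_i) <> 0 for
   some i since phi (e_i) phi (a) = phi (e_i a) -> phi (a).  For f in A^* the
   form T_f (b, c) := f (b) phi (c) satisfies a.T_f = phi (a) T_f and
   T_f.a = T_(f.a), and it lies in sigma wc when f does, so
   f |-> m_i (T_f) / phi (e_i) is a phi-mean. *)

Section Functionals.
Variables (R : realType) (A : completeNormedModType R[i]).
Local Notation C := R[i].
Implicit Types (f g phi : A -> C) (S : seq (A -> C)).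

Lemma lin_fun0 f : lin_fun f -> f 0 = 0.
Proof.
by move=> lf; have := lf 1 0 0; rewrite scale1r addr0 mul1r -{1}[f 0]add0r => /addIr.
Qed.

Lemma lin_funZ f k x : lin_fun f -> f (k *: x) = k * f x.
Proof. by move=> lf; rewrite -[k *: x]addr0 lf lin_fun0 // addr0. Qed.

Lemma lin_funB f x y : lin_fun f -> f (x - y) = f x - f y.
Proof. by move=> lf; rewrite addrC -scaleN1r lf mulN1r addrC. Qed.

Definition fun_subspace (P : (A -> C) -> Prop) : Prop :=
  P (fun _ => 0) /\ forall (k : C) f g, P f -> P g -> P (fun x => k * f x + g x).

Definition common_kernel S : set A := [set x | List.Forall (fun f => f x = 0) S].

Lemma common_kernel0 S : List.Forall (@lin_fun R A) S -> common_kernel S 0.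
Proof. by apply: List.Forall_impl => f; apply: lin_fun0. Qed.

Lemma common_kernel_lin S (k : C) x y : List.Forall (@lin_fun R A) S ->
  common_kernel S x -> common_kernel S y -> common_kernel S (k *: x + y).
Proof.
elim: S => [|f S IH /List.Forall_cons_iff[lf linS]]; first by constructor.
move=> /List.Forall_cons_iff[fx Sx] /List.Forall_cons_iff[fy Sy].
by apply/List.Forall_cons_iff; rewrite lf fx fy mulr0 addr0; split; last exact: IH.
Qed.

Lemma fun_subspace_kernel_incl P S phi : fun_subspace P ->
  List.Forall P S -> List.Forall (@lin_fun R A) S -> lin_fun phi ->
  (forall x, common_kernel S x -> phi x = 0) -> P phi.
Proof.
move=> [P0 Plin]; elim: S phi => [|f S IH] phi.
  move=> _ _ _ phi0; suff -> : phi = (fun _ => 0) by [].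
  by apply: funext => x; apply: phi0.
move=> /List.Forall_cons_iff[Pf PS] /List.Forall_cons_iff[lf linS] lphi phi0.
have [fS0|] := pselect (forall x, common_kernel S x -> f x = 0).
  by apply: IH => // x Sx; apply/phi0/List.Forall_cons_iff; split => //; apply: fS0.
move=> /existsNP[x0 /not_implyP[Sx0 /eqP fx0]].
pose c := phi x0 / f x0.
pose psi x := - c * f x + phi x.
have Ppsi : P psi.
  apply: IH => // [k x y|x Sx]; first by rewrite /psi lf lphi; ring.
  pose y := - (f x / f x0) *: x0 + x.
  have fy : f y = 0 by rewrite /y lf mulNr divfK // addNr.
  have Sy : common_kernel S y by exact: common_kernel_lin.
  have := phi0 y (List.Forall_cons _ fy Sy).
  by rewrite /y lphi /psi /c => phiy; rewrite -phiy; field.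
suff -> : phi = (fun x => c * f x + psi x) by apply: Plin.
by apply: funext => x; rewrite /psi; ring.
Qed.

Definition kernel_filter (Apre : (A -> C) -> Prop) : set_system A :=
  [set U | exists S, List.Forall Apre S /\ common_kernel S `<=` U].

Lemma kernel_filter_filter Apre : Filter (kernel_filter Apre).
Proof.
split; first by exists [::].
- move=> U V [S [PS SU]] [S' [PS' S'V]]; exists (S ++ S').
  split; first exact/List.Forall_app.
  by move=> x /List.Forall_app[Sx S'x]; split; [apply: SU | apply: S'V].
- by move=> U V UV [S [PS SU]]; exists S; split => // x /SU /UV.
Qed.

Lemma kernel_filter_cvg0 Apre f : Apre f -> f @ kernel_filter Apre --> (0 : C^o).
Proof.
move=> Pf V V0; exists [:: f].
split; first exact: (List.Forall_cons _ Pf (List.Forall_nil _)).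
by move=> x /List.Forall_cons_iff[fx _]; rewrite /= fx; exact: nbhs_singleton V0.
Qed.

Lemma wstar_cont_kernel_incl Apre phi :
  (forall f, Apre f -> lin_fun f) -> lin_fun phi -> wstar_cont Apre phi ->
  exists S, List.Forall Apre S /\ forall x, common_kernel S x -> phi x = 0.
Proof.
move=> Plin lphi wphi.
have : phi @ kernel_filter Apre --> (phi 0 : C^o).
  apply: wphi => [|f Pf]; first exact: kernel_filter_filter.
  by rewrite lin_fun0; [exact: kernel_filter_cvg0 | exact: Plin].
rewrite lin_fun0 // => /(_ _ (nbhsx_ballx (0 : C^o) _ ltr01))[S [PS Sball]].
exists S; split => // x Sx; apply: contrapT => /eqP phix.
have linS : List.Forall (@lin_fun R A) S by apply: List.Forall_impl PS.
have Sy : common_kernel S ((phi x)^-1 *: x).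
  by rewrite -[_ *: x]addr0; apply: common_kernel_lin => //; apply: common_kernel0.
have := Sball _ Sy; rewrite /ball /= lin_funZ // mulVf // sub0r normrN normr1.
by rewrite ltxx.
Qed.

Lemma wstar_cont_predual Apre phi : fun_subspace Apre ->
  (forall f, Apre f -> lin_fun f) -> lin_fun phi -> wstar_cont Apre phi -> Apre phi.
Proof.
move=> Psub Plin lphi wphi.
have [S [PS Sphi]] := wstar_cont_kernel_incl Plin lphi wphi.
by apply: (fun_subspace_kernel_incl Psub PS) => //; apply: List.Forall_impl PS.
Qed.

Lemma opbound_norm f c : opbound f c -> opbound f `|c|.
Proof.
move=> bf a; have c_ge0 : 0 <= c * `|a| by apply: le_trans (bf a).
by rewrite -normr_id -normrM ger0_norm //; apply: bf.
Qed.

Lemma dual_on_sub (P Q : (A -> C) -> Prop) Phi :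
  (forall f, Q f -> P f) -> dual_on P Phi -> dual_on Q Phi.
Proof.
move=> QP [linPhi [c bPhi]]; split=> [k f g /QP Pf /QP Pg|]; first exact: linPhi.
by exists c => f d /QP; apply: bPhi.
Qed.

Lemma dual_onMr P Phi (k : C) : dual_on P Phi -> dual_on P (fun f => Phi f * k).
Proof.
move=> [linPhi [c bPhi]]; split=> [l f g Pf Pg|].
  by rewrite linPhi // mulrDl mulrA.
exists (c * `|k|) => f d Pf d0 bf; rewrite normrM mulrAC.
by apply: ler_wpM2r => //; apply: bPhi.
Qed.

Lemma wstar_contMr Apre g (k : C) :
  wstar_cont Apre g -> wstar_cont Apre (fun a => g a * k).
Proof. by move=> wg F a FF Fa; apply: cvgMr_tmp; apply: wg. Qed.

Lemma net_cvg_bounded_neq0 (I : Type) (le : I -> I -> Prop) (x : I -> A) y f c :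
  (forall i, le i i) -> lin_fun f -> opbound f c -> net_cvg le x y -> f y != 0 ->
  exists i, f (x i) != 0.
Proof.
move=> le_refl lf /opbound_norm bf xy fy0.
have c1_gt0 : 0 < `|c| + 1 by rewrite ltr_wpDl.
pose eps := `|f y| / (`|c| + 1).
have eps_gt0 : 0 < eps by rewrite divr_gt0 ?normr_gt0.
have [i /(_ i (le_refl i)) xiy] := xy _ eps_gt0.
exists i; apply/negP => /eqP fxi0.
have : `|f y| < `|f y|.
  rewrite [X in _ < X](_ : _ = (`|c| + 1) * eps); last by rewrite mulrC divfK ?gt_eqF.
  apply: (@le_lt_trans _ _ (`|c| * eps)); last by rewrite ltr_pM2r // ltrDl.
  have := bf (x i - y); rewrite lin_funB // fxi0 sub0r normrN => /le_trans; apply.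
  by rewrite ler_wpM2l // ltW.
by rewrite ltxx.
Qed.

Lemma bil_elt0 : bil_elt (fun (_ _ : A) => 0 : C).
Proof.
split; [|split; last by exists 0 => x y; rewrite normr0 !mul0r];
  by move=> *; rewrite mulr0 addr0.
Qed.

Lemma bidual_elt0 (Psi : (A -> A -> C) -> C) : bidual_elt Psi -> Psi (fun _ _ => 0) = 0.
Proof.
move=> [linPsi _]; have := linPsi 1 _ _ bil_elt0 bil_elt0.
have -> : (fun x y : A => 1 * (0 : C) + 0) = (fun _ _ => 0).
  by apply: funext => x; apply: funext => y; rewrite mulr0 addr0.
by rewrite mul1r -{1}[Psi _]add0r => /addIr.
Qed.

Lemma bidual_eltZ (Psi : (A -> A -> C) -> C) (k : C) T :
  bidual_elt Psi -> bil_elt T -> Psi (fun x y => k * T x y) = k * Psi T.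
Proof.
move=> bPsi bT; have := bPsi.1 k _ _ bT bil_elt0; rewrite bidual_elt0 // addr0 => <-.
by congr Psi; apply: funext => x; apply: funext => y; rewrite addr0.
Qed.

End Functionals.

Section TensorCharacter.
Variables (R : realType) (A : completeNormedModType R[i]).
Local Notation C := R[i].
Variables (mul : A -> A -> A) (phi : A -> C) (cp : C).
Hypotheses (lphi : lin_fun phi) (mphi : forall a b, phi (mul a b) = phi a * phi b).
Hypotheses (cp_ge0 : 0 <= cp) (bphi : opbound phi cp).
Implicit Types (f : A -> C) (Psi : (A -> A -> C) -> C).

Definition tensor_char f : A -> A -> C := fun b c => f b * phi c.

Lemma bilbound_tensor_char f d :
  0 <= d -> opbound f d -> bilbound (tensor_char f) (d * cp).
Proof.
move=> d_ge0 bf x y.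
rewrite normrM (_ : d * cp * `|x| * `|y| = d * `|x| * (cp * `|y|)); last by ring.
by apply: ler_pM.
Qed.

Lemma bil_elt_tensor_char f : dual_elt f -> bil_elt (tensor_char f).
Proof.
move=> [lf [c bf]]; split=> [k x y z|]; first by rewrite /tensor_char lf mulrDl mulrA.
split=> [k x y z|]; first by rewrite /tensor_char lphi mulrDr mulrCA.
by exists (`|c| * cp); apply: bilbound_tensor_char; [|exact: opbound_norm].
Qed.

Lemma bract_tensor_char f a : bract mul (tensor_char f) a = tensor_char (ract mul f a).
Proof. by []. Qed.

Lemma tensor_char_pi_star : tensor_char phi = pi_star mul phi.
Proof. by apply: funext => b; apply: funext => c; rewrite /pi_star mphi. Qed.

Lemma bidual_blact_tensor_char Psi a f : bidual_elt Psi -> dual_elt f ->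
  Psi (blact mul a (tensor_char f)) = phi a * Psi (tensor_char f).
Proof.
move=> bPsi df; rewrite -bidual_eltZ //; last exact: bil_elt_tensor_char.
congr Psi; apply: funext => b; apply: funext => c.
by rewrite /blact /tensor_char mphi; ring.
Qed.

Lemma dual_on_tensor_char Psi :
  bidual_elt Psi -> dual_on (@dual_elt R A) (fun f => Psi (tensor_char f)).
Proof.
move=> bPsi; split=> [k f g df dg|].
  rewrite -bPsi.1; try exact: bil_elt_tensor_char.
  congr Psi; apply: funext => b; apply: funext => c.
  by rewrite /tensor_char mulrDl mulrA.
have [c bPsi2] := bPsi.2; exists (c * cp) => f d df d_ge0 bf.
rewrite -mulrA; apply: bPsi2; first exact: bil_elt_tensor_char.
  exact: mulr_ge0.
by rewrite mulrC; apply: bilbound_tensor_char.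
Qed.

Lemma swc_bil_tensor_char Apre f :
  wstar_cont Apre phi -> swc_dual mul Apre f -> swc_bil mul Apre (tensor_char f).
Proof.
move=> wphi [df swcf]; split=> [|Psi bPsi]; first exact: bil_elt_tensor_char.
split; last exact: (swcf _ (dual_on_tensor_char bPsi)).2.
have -> : (fun a => Psi (blact mul a (tensor_char f)))
          = (fun a => phi a * Psi (tensor_char f)).
  by apply: funext => a; apply: bidual_blact_tensor_char.
exact: wstar_contMr.
Qed.

End TensorCharacter.

Theorem proposition2p7 (R : realType) (A : completeNormedModType R[i])
  (mul : A -> A -> A) (Apre : (A -> R[i]) -> Prop) (phi : A -> R[i]) :
  dual_banach_algebra mul Apre ->
  wstar_character mul Apre phi ->
  johnson_pseudo_connes_amenable mul Apre ->
  phi_connes_amenable mul Apre phi.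
Proof.
move=> [_ [Pdual [P0 [Plin_comb _]]]] [lphi [mphi [[a0 phia0] wphi]]].
move=> [I [le [m [e [[_ [le_refl _]] [mbid [mcomm [me ecvg]]]]]]]].
have Plin f : Apre f -> lin_fun f by case/Pdual.
have Aphi := wstar_cont_predual (conj P0 Plin_comb) Plin lphi wphi.
have [_ [c /opbound_norm bphi]] := Pdual _ Aphi.
have [i phiei] : exists i, phi (e i) != 0.
  have [j] := net_cvg_bounded_neq0 le_refl lphi bphi (ecvg a0) phia0.
  by rewrite mphi mulf_eq0 negb_or => /andP[]; exists j.
exists (fun f => m i (tensor_char phi f) / phi (e i)); split; [|split].
- apply/dual_onMr/(dual_on_sub _ (dual_on_tensor_char lphi (normr_ge0 c) bphi (mbid i))).
  by move=> f [].
- by rewrite (tensor_char_pi_star mphi) -me // divff.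
move=> a f swcf; have [df _] := swcf.
rewrite -bract_tensor_char mcomm.
  by rewrite (bidual_blact_tensor_char lphi mphi bphi) ?mulrA.
exact: (swc_bil_tensor_char lphi mphi (normr_ge0 c) bphi wphi swcf).
Qed.
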